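(* Let $\mathbf{W}=\langle W;\to,\neg,{}^{+},{}^{-},1\rangle$ be a quasi-Wajsberg* algebra and $0:=1\to 1$. Then for any $x,y\in W$: (1) $0\to(\neg x)^{+}=0\to\neg x^{-}$ and $0\to(\neg x)^{-}=0\to\neg x^{+}$; (2) $0\to x^{+-}=0=0\to x^{-+}$; (3) $0\to x^{++}=0\to x^{+}$ and $0\to x^{--}=0\to x^{-}$; (4) $(\neg x)^{+}\to y=\neg x^{-}\to y$, $x\to(\neg y)^{+}=x\to\neg y^{-}$, $(\neg x)^{-}\to y=\neg x^{+}\to y$ and $x\to(\neg y)^{-}=x\to\neg y^{+}$; (5) $x^{+-}\to y=0\to y=x^{-+}\to y$ and $x\to y^{+-}=x\to 0=x\to y^{-+}$; (6) $x^{++}\to y=x^{+}\to y$, $x\to y^{++}=x\to y^{+}$, $x^{--}\to y=x^{-}\to y$ and $x\to y^{--}=x\to y^{-}$.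
   Context: A quasi-Wajsberg* algebra is an algebra $\langle W;\to,\neg,{}^{+},{}^{-},1\rangle$ of type $\langle2,1,1,1,0\rangle$ such that for all $x,y,z\in W$: (QW*1) $x\to y=\neg y\to\neg x$; (QW*2) $(x\to 1)\to((y\to 1)\to z)=(y\to 1)\to((x\to 1)\to z)$; (QW*3) $(1\to x)\to 1=1$; (QW*4) $(z\to z)\to(x\to y)=x\to y$; (QW*5) $(1\to 1)\to x^{+}=((1\to 1)\to x)^{+}=(x\to 1)\to 1$ and $(1\to 1)\to x^{-}=((1\to 1)\to x)^{-}=(x\to\neg 1)\to\neg 1$; (QW*6) $x\to y=(y^{+}\to x^{-})\to(x^{+}\to y^{-})$; (QW*7) $\neg(x\to y)=y\to x$; (QW*8) $\neg\neg x=x$; (QW*9) $(x\to(\neg x\to y))^{+}=x^{+}\to(\neg x^{+}\to y^{+})$; (QW*10) $x\vee y=y\vee x$; (QW*11) $x\vee(y\vee z)=(x\vee y)\vee z$; (QW*12) $x\to(y\vee z)=(x\to y)\vee(x\to z)$; where $x\vee y:=((x^{+}\to y^{+})^{+}\to(\neg x)^{-})\to((y^{-}\to x^{-})^{-}\to x^{-})$. Conventions: ${}^+,{}^-$ bind tighter than $\neg$, which binds tighter than $\to$ (so $\neg x^{-}$ means $\neg(x^{-})$); $x^{+-}$ means $(x^{+})^{-}$, etc. *)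

Definition qw_join {W : Type} (imp : W -> W -> W) (neg plus minus : W -> W)
  (x y : W) : W :=
  imp (imp (plus (imp (plus x) (plus y))) (minus (neg x)))
      (imp (minus (imp (minus y) (minus x))) (minus x)).

Definition is_QWstar {W : Type} (imp : W -> W -> W) (neg plus minus : W -> W)
  (one : W) : Prop :=
  let join := qw_join imp neg plus minus in
  (forall x y, imp x y = imp (neg y) (neg x)) /\
  (forall x y z, imp (imp x one) (imp (imp y one) z)
               = imp (imp y one) (imp (imp x one) z)) /\
  (forall x, imp (imp one x) one = one) /\
  (forall x y z, imp (imp z z) (imp x y) = imp x y) /\
  (forall x, imp (imp one one) (plus x) = plus (imp (imp one one) x) /\
             plus (imp (imp one one) x) = imp (imp x one) one) /\
  (forall x, imp (imp one one) (minus x) = minus (imp (imp one one) x) /\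
             minus (imp (imp one one) x) = imp (imp x (neg one)) (neg one)) /\
  (forall x y, imp x y = imp (imp (plus y) (minus x)) (imp (plus x) (minus y))) /\
  (forall x y, neg (imp x y) = imp y x) /\
  (forall x, neg (neg x) = x) /\
  (forall x y, plus (imp x (imp (neg x) y))
             = imp (plus x) (imp (neg (plus x)) (plus y))) /\
  (forall x y, join x y = join y x) /\
  (forall x y z, join x (join y z) = join (join x y) z) /\
  (forall x y z, imp x (join y z) = join (imp x y) (imp x z)).


(* With 0 := 1 -> 1, QW*12 applied to the idempotent join a v a = 0 -> a gives
   a -> (0 -> b) = a -> b, and contraposition gives (0 -> a) -> b = a -> b.
   So a -> y and y -> a depend on a only through 0 -> a, and (4)-(6) follow
   from (1)-(3); these are computed from QW*5, which evaluates 0 -> a^+ and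
   0 -> a^- as (a -> 1) -> 1 and (a -> ~1) -> ~1. *)

Section QuasiWajsbergStar.

Context {W : Type} {imp : W -> W -> W} {neg plus minus : W -> W} {one : W}.
Hypothesis HW : is_QWstar imp neg plus minus one.

Local Infix "-->" := imp (at level 55, right associativity).
Local Notation zero := (one --> one).
Local Notation join := (qw_join imp neg plus minus).

Lemma imp_contra x y : x --> y = neg y --> neg x.
Proof. destruct HW as [E _]; apply E. Qed.

Lemma one_imp_imp_one x : (one --> x) --> one = one.
Proof. destruct HW as (_ & _ & E & _); apply E. Qed.

Lemma self_imp_imp z x y : (z --> z) --> (x --> y) = x --> y.
Proof. destruct HW as (_ & _ & _ & E & _); apply E. Qed.

Lemma zero_imp_plusC x : zero --> plus x = plus (zero --> x).
Proof. destruct HW as (_ & _ & _ & _ & E & _); apply E. Qed.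

Lemma plus_zero_imp x : plus (zero --> x) = (x --> one) --> one.
Proof. destruct HW as (_ & _ & _ & _ & E & _); apply E. Qed.

Lemma zero_imp_minusC x : zero --> minus x = minus (zero --> x).
Proof. destruct HW as (_ & _ & _ & _ & _ & E & _); apply E. Qed.

Lemma minus_zero_imp x : minus (zero --> x) = (x --> neg one) --> neg one.
Proof. destruct HW as (_ & _ & _ & _ & _ & E & _); apply E. Qed.

Lemma imp_plus_minus x y : x --> y = (plus y --> minus x) --> (plus x --> minus y).
Proof. destruct HW as (_ & _ & _ & _ & _ & _ & E & _); apply E. Qed.

Lemma neg_imp x y : neg (x --> y) = y --> x.
Proof. destruct HW as (_ & _ & _ & _ & _ & _ & _ & E & _); apply E. Qed.

Lemma negK x : neg (neg x) = x.
Proof. destruct HW as (_ & _ & _ & _ & _ & _ & _ & _ & E & _); apply E. Qed.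

Lemma imp_join x y z : x --> join y z = join (x --> y) (x --> z).
Proof. destruct HW as (_ & _ & _ & _ & _ & _ & _ & _ & _ & _ & _ & _ & E); apply E. Qed.

Lemma zero_imp_plus x : zero --> plus x = (x --> one) --> one.
Proof. now rewrite zero_imp_plusC, plus_zero_imp. Qed.

Lemma zero_imp_minus x : zero --> minus x = (x --> neg one) --> neg one.
Proof. now rewrite zero_imp_minusC, minus_zero_imp. Qed.

Lemma plus_imp x y : plus (x --> y) = ((x --> y) --> one) --> one.
Proof. now rewrite <- plus_zero_imp, self_imp_imp. Qed.

Lemma minus_imp x y : minus (x --> y) = ((x --> y) --> neg one) --> neg one.
Proof. now rewrite <- minus_zero_imp, self_imp_imp. Qed.

Lemma neg_zero : neg zero = zero.
Proof. apply neg_imp. Qed.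

Lemma imp_self z : z --> z = zero.
Proof.
  rewrite <- (self_imp_imp one z z), <- neg_imp, self_imp_imp.
  apply neg_zero.
Qed.

Lemma zero_imp_one : zero --> one = one.
Proof. apply one_imp_imp_one. Qed.

Lemma one_imp_zero : one --> zero = neg one.
Proof. now rewrite <- neg_imp, zero_imp_one. Qed.

Lemma neg_one_imp_one : neg one --> one = one.
Proof. rewrite <- one_imp_zero; apply one_imp_imp_one. Qed.

Lemma zero_imp_neg x : zero --> neg x = neg (zero --> x).
Proof. now rewrite imp_contra, negK, neg_zero, neg_imp. Qed.

Lemma imp_neg_one x : x --> neg one = neg (neg x --> one).
Proof. now rewrite imp_contra, negK, neg_imp. Qed.

Lemma plus_one : plus one = one.
Proof. now rewrite <- zero_imp_one, plus_zero_imp, zero_imp_one. Qed.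

Lemma minus_one : minus one = zero.
Proof.
  rewrite <- zero_imp_one, minus_zero_imp, zero_imp_one, imp_contra, negK.
  now rewrite neg_imp, neg_one_imp_one.
Qed.

Lemma plus_zero : plus zero = zero.
Proof. now rewrite plus_imp, zero_imp_one. Qed.

Lemma minus_zero : minus zero = zero.
Proof. now rewrite minus_imp, zero_imp_neg, zero_imp_one, imp_self. Qed.

Lemma join_self x : join x x = zero --> x.
Proof.
  unfold qw_join.
  rewrite (imp_self (plus x)), (imp_self (minus x)), plus_zero, minus_zero.
  rewrite (imp_plus_minus zero x), plus_zero, minus_zero.
  rewrite zero_imp_minus, <- (imp_contra one x), <- (neg_imp zero (plus x)).
  now rewrite zero_imp_plus, neg_imp, (imp_contra (one --> x)), negK, neg_imp.
Qed.

Lemma zero_imp_absorb_r x y : x --> (zero --> y) = x --> y.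
Proof. now rewrite <- (join_self y), imp_join, join_self, self_imp_imp. Qed.

Lemma zero_imp_absorb_l x y : (zero --> x) --> y = x --> y.
Proof.
  now rewrite imp_contra, <- zero_imp_neg, zero_imp_absorb_r, <- imp_contra.
Qed.

Lemma minus_imp_one x : minus x --> one = one.
Proof.
  rewrite <- zero_imp_absorb_l, zero_imp_minus, (imp_contra (x --> neg one)).
  now rewrite negK, neg_imp, one_imp_imp_one.
Qed.

Lemma imp_l_zero_eq x x' y : zero --> x = zero --> x' -> x --> y = x' --> y.
Proof. intro E; now rewrite <- zero_imp_absorb_l, E, zero_imp_absorb_l. Qed.

Lemma imp_r_zero_eq x y y' : zero --> y = zero --> y' -> x --> y = x --> y'.
Proof. intro E; now rewrite <- zero_imp_absorb_r, E, zero_imp_absorb_r. Qed.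

Lemma imp_l_zero_eq0 x y : zero --> x = zero -> x --> y = zero --> y.
Proof. intro E; apply imp_l_zero_eq; rewrite E; symmetry; apply imp_self. Qed.

Lemma imp_r_zero_eq0 x y : zero --> y = zero -> x --> y = x --> zero.
Proof. intro E; apply imp_r_zero_eq; rewrite E; symmetry; apply imp_self. Qed.

Lemma triple_imp_one x : ((x --> one) --> one) --> one = x --> one.
Proof.
  pose proof (imp_plus_minus x one) as E.
  rewrite plus_one, minus_one, <- (neg_imp zero (plus x)), zero_imp_plus in E.
  now rewrite (imp_contra (one --> minus x)), negK, neg_imp, minus_imp_one in E.
Qed.

Lemma triple_imp_neg_one x : ((x --> neg one) --> neg one) --> neg one = x --> neg one.
Proof. now rewrite !imp_neg_one, !negK, triple_imp_one. Qed.

Lemma zero_imp_plus_neg x : zero --> plus (neg x) = zero --> neg (minus x).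
Proof.
  rewrite zero_imp_plus, zero_imp_neg, zero_imp_minus, neg_imp.
  now rewrite imp_neg_one, <- imp_contra.
Qed.

Lemma zero_imp_minus_neg x : zero --> minus (neg x) = zero --> neg (plus x).
Proof.
  rewrite zero_imp_minus, zero_imp_neg, zero_imp_plus, neg_imp.
  now rewrite <- (imp_contra one x), (imp_contra (one --> x)), negK, neg_imp.
Qed.

Lemma zero_imp_minus_plus x : zero --> minus (plus x) = zero.
Proof.
  rewrite zero_imp_minusC, zero_imp_plus, minus_imp, (imp_neg_one ((x --> one) --> one)).
  now rewrite (neg_imp (x --> one)), one_imp_imp_one, imp_self.
Qed.

Lemma zero_imp_plus_minus x : zero --> plus (minus x) = zero.
Proof. now rewrite zero_imp_plus, minus_imp_one. Qed.

Lemma zero_imp_plus_plus x : zero --> plus (plus x) = zero --> plus x.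
Proof. now rewrite zero_imp_plusC, zero_imp_plus, plus_imp, triple_imp_one. Qed.

Lemma zero_imp_minus_minus x : zero --> minus (minus x) = zero --> minus x.
Proof. now rewrite zero_imp_minusC, zero_imp_minus, minus_imp, triple_imp_neg_one. Qed.

End QuasiWajsbergStar.

Theorem proposition3p4 (W : Type) (imp : W -> W -> W) (neg plus minus : W -> W)
  (one : W) (HW : is_QWstar imp neg plus minus one) :
  let zero := imp one one in
  forall x y : W,
  (* (1) *)
  (imp zero (plus (neg x)) = imp zero (neg (minus x)) /\
   imp zero (minus (neg x)) = imp zero (neg (plus x))) /\
  (* (2) *)
  (imp zero (minus (plus x)) = zero /\ zero = imp zero (plus (minus x))) /\
  (* (3) *)
  (imp zero (plus (plus x)) = imp zero (plus x) /\
   imp zero (minus (minus x)) = imp zero (minus x)) /\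
  (* (4) *)
  (imp (plus (neg x)) y = imp (neg (minus x)) y /\
   imp x (plus (neg y)) = imp x (neg (minus y)) /\
   imp (minus (neg x)) y = imp (neg (plus x)) y /\
   imp x (minus (neg y)) = imp x (neg (plus y))) /\
  (* (5) *)
  (imp (minus (plus x)) y = imp zero y /\ imp zero y = imp (plus (minus x)) y /\
   imp x (minus (plus y)) = imp x zero /\ imp x zero = imp x (plus (minus y))) /\
  (* (6) *)
  (imp (plus (plus x)) y = imp (plus x) y /\
   imp x (plus (plus y)) = imp x (plus y) /\
   imp (minus (minus x)) y = imp (minus x) y /\
   imp x (minus (minus y)) = imp x (minus y)).
Proof.
  intros zero x y; subst zero.
  repeat split.
  - apply (zero_imp_plus_neg HW).
  - apply (zero_imp_minus_neg HW).
  - apply (zero_imp_minus_plus HW).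
  - symmetry; apply (zero_imp_plus_minus HW).
  - apply (zero_imp_plus_plus HW).
  - apply (zero_imp_minus_minus HW).
  - apply (imp_l_zero_eq HW), (zero_imp_plus_neg HW).
  - apply (imp_r_zero_eq HW), (zero_imp_plus_neg HW).
  - apply (imp_l_zero_eq HW), (zero_imp_minus_neg HW).
  - apply (imp_r_zero_eq HW), (zero_imp_minus_neg HW).
  - apply (imp_l_zero_eq0 HW), (zero_imp_minus_plus HW).
  - symmetry; apply (imp_l_zero_eq0 HW), (zero_imp_plus_minus HW).
  - apply (imp_r_zero_eq0 HW), (zero_imp_minus_plus HW).
  - symmetry; apply (imp_r_zero_eq0 HW), (zero_imp_plus_minus HW).
  - apply (imp_l_zero_eq HW), (zero_imp_plus_plus HW).
  - apply (imp_r_zero_eq HW), (zero_imp_plus_plus HW).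
  - apply (imp_l_zero_eq HW), (zero_imp_minus_minus HW).
  - apply (imp_r_zero_eq HW), (zero_imp_minus_minus HW).
Qed.
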